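(* Let $L \subseteq \Sigma^*$ be a commutative star-free language. Then for every $\Gamma \subseteq \Sigma$ the language $\pi_\Gamma(L)$ is commutative and star-free.
   Context: $L$ is commutative if for every $w \in L$, every word $u$ with $|u|_a = |w|_a$ for all letters $a$ also lies in $L$ ($|u|_a$ = number of occurrences of $a$ in $u$). Star-free languages over an alphabet are the smallest class containing $\{\varepsilon\}$, the full monoid and the singletons $\{a\}$, closed under Boolean operations and concatenation. For $\Gamma \subseteq \Sigma$, $\pi_\Gamma : \Sigma^* \to \Gamma^*$ is the homomorphism with $\pi_\Gamma(x) = x$ for $x \in \Gamma$ and $\pi_\Gamma(x) = \varepsilon$ otherwise, applied elementwise to languages. *)

From mathcomp Require Import all_boot.
Set Implicit Arguments. Unset Strict Implicit. Unset Printing Implicit Defensive.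

Definition lang (T : finType) := seq T -> Prop.

Definition commutative_lang (T : finType) (L : lang T) : Prop :=
  forall w u : seq T, L w -> (forall a : T, count_mem a u = count_mem a w) -> L u.

Inductive sfexp (T : finType) : Type :=
| SFEps
| SFFull
| SFSym of T
| SFCompl of sfexp T
| SFUnion of sfexp T & sfexp T
| SFInter of sfexp T & sfexp T
| SFCat of sfexp T & sfexp T.

Fixpoint sf_sem (T : finType) (e : sfexp T) : lang T :=
  match e with
  | SFEps => fun w => w = [::]
  | SFFull => fun _ => True
  | SFSym a => fun w => w = [:: a]
  | SFCompl e1 => fun w => ~ sf_sem e1 w
  | SFUnion e1 e2 => fun w => sf_sem e1 w \/ sf_sem e2 w
  | SFInter e1 e2 => fun w => sf_sem e1 w /\ sf_sem e2 w
  | SFCat e1 e2 => fun w => exists u v, w = u ++ v /\ sf_sem e1 u /\ sf_sem e2 v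
  end.

Definition star_free (T : finType) (L : lang T) : Prop :=
  exists e : sfexp T, forall w, L w <-> sf_sem e w.

Definition subalph (T : finType) (G : {set T}) : finType := {x : T | x \in G}.

Definition proj_word (T : finType) (G : {set T}) (w : seq T) : seq (subalph G) :=
  pmap (fun x : T => insub x) w.

Definition proj_lang (T : finType) (G : {set T}) (L : lang T) : lang (subalph G) :=
  fun u => exists w, L w /\ u = proj_word G w.
Arguments proj_lang [T] G L.
Arguments proj_word [T] G w.

From mathcomp Require Import all_boot.
From mathcomp Require Import zify.
From Stdlib Require Import Classical.
Set Implicit Arguments. Unset Strict Implicit. Unset Printing Implicit Defensive.

(* The proof rests on one invariant of star-free languages, aperiodicity with
   threshold n: inside any context x _ z, the blocks a^p and a^q are
   interchangeable as soon as min(p, n) = min(q, n).  Every star-free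
   expression has such a threshold (induction on the expression; the only
   real work is concatenation).  For a commutative language L the
   threshold gives more: membership of w depends only on the capped letter
   counts min(|w|_a, n), because w can be rearranged into a^|w|_a b^|w|_b ...
   and each block pumped separately.

   Invariance under a relation on letter counts passes from L to pi_Gamma(L):
   a word u over Gamma with the right counts is the projection of u followed
   by the non-Gamma letters of some w in L.  With exact counts this gives
   commutativity, with capped counts it gives a language that is a finite
   union of "capped count profiles", each of which is star-free. *)

Section Aperiodicity.
Variable T : finType.

Definition aperiodic (L : lang T) (n : nat) : Prop :=
  forall (x z : seq T) (a : T) (p q : nat), minn p n = minn q n ->
    (L (x ++ nseq p a ++ z) <-> L (x ++ nseq q a ++ z)).

(* Languages of words of length at most k are aperiodic with threshold k + 1:
   a long block makes the word too long on both sides. *)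
Lemma aperiodic_bounded (L : lang T) k :
  (forall w, L w -> size w <= k) -> aperiodic L k.+1.
Proof.
move=> short x z a p q hpq; have [-> // | neq_pq] := eqVneq p q.
have long r : k < r -> ~ L (x ++ nseq r a ++ z).
  by move=> hr /short; rewrite !size_cat size_nseq; lia.
have [hp hq] : k < p /\ k < q by lia.
by split=> h; exfalso; [exact: long hp h | exact: long hq h].
Qed.

Lemma cat_eq_cat (S : Type) (u v x y : seq S) : u ++ v = x ++ y ->
  (exists t, x = u ++ t /\ v = t ++ y) \/ (exists t, u = x ++ t /\ y = t ++ v).
Proof.
elim: u x => [|c u IH] [|d x] //= e.
- by left; exists [::].
- by left; exists (d :: x).
- by right; exists (c :: u).
case: e => <- /IH [[t [-> ->]] | [t [-> ->]]]; [left | right]; by exists t.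
Qed.

Lemma nseq_eq_cat (a : T) m (t s : seq T) : nseq m a = t ++ s ->
  [/\ t = nseq (size t) a, s = nseq (size s) a & size t + size s = m].
Proof.
move=> e; have : all (pred1 a) (t ++ s) by rewrite -e; apply/all_pred1P; rewrite size_nseq.
rewrite all_cat => /andP [/all_pred1P et /all_pred1P es].
by split=> //; rewrite -size_cat -e size_nseq.
Qed.

Lemma cat_block_split (u v x z : seq T) a m : u ++ v = x ++ nseq m a ++ z ->
  [\/ exists y, x = u ++ y /\ v = y ++ nseq m a ++ z,
      exists i j, [/\ i + j = m, u = x ++ nseq i a & v = nseq j a ++ z]
    | exists y, u = x ++ nseq m a ++ y /\ z = y ++ v].
Proof.
case/cat_eq_cat => [[y [-> ->]] | [t [-> /esym/cat_eq_cat]]]; first by apply: Or31; exists y.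
case=> [[s [/nseq_eq_cat [et es hts] ->]] | [y [-> ->]]].
- by apply: Or32; exists (size t), (size s); rewrite -et -es.
- by apply: Or33; exists y.
Qed.

Definition lang_cat (L1 L2 : lang T) : lang T :=
  fun w => exists u v, w = u ++ v /\ L1 u /\ L2 v.

(* Concatenation: thresholds add up.  When the cut falls inside the block,
   a^p = a^i a^j is redistributed as a^q = a^i' a^j' with the same caps. *)
Lemma aperiodic_cat (L1 L2 : lang T) n1 n2 :
  aperiodic L1 n1 -> aperiodic L2 n2 -> aperiodic (lang_cat L1 L2) (n1 + n2).
Proof.
move=> ap1 ap2.
suff pump x z a p q : minn p (n1 + n2) = minn q (n1 + n2) ->
    lang_cat L1 L2 (x ++ nseq p a ++ z) -> lang_cat L1 L2 (x ++ nseq q a ++ z).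
  by move=> x z a p q hpq; split; apply: pump.
rewrite /lang_cat => hpq [u [v [/esym/cat_block_split split_uv]]].
case: split_uv => [[y [-> ->]] | [i [j [hij -> ->]]] | [y [-> ->]]] [L1u L2v].
- exists u, (y ++ nseq q a ++ z); split; first by rewrite -catA.
  by split=> //; apply/(ap2 y z a p q) => //; lia.
- have [j' [le_j'q cap1 cap2]] : exists j', [/\ j' <= q, minn i n1 = minn (q - j') n1
      & minn j n2 = minn j' n2].
    by case: (ltnP i n1) => hi; [exists (q - i) | exists (minn j n2)]; split; lia.
  exists (x ++ nseq (q - j') a), (nseq j' a ++ z); split.
    by rewrite -catA [nseq (q - j') a ++ _]catA -nseqD subnK.
  split; last exact/(ap2 [::] z a j j').
  by have [+ _] := ap1 x [::] a i (q - j') cap1; rewrite !cats0; apply.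
- exists (x ++ nseq q a ++ y), v; split; first by rewrite -!catA.
  by split=> //; apply/(ap1 x y a p q) => //; lia.
Qed.

Lemma aperiodic_sf_sem (e : sfexp T) : exists n, aperiodic (sf_sem e) n.
Proof.
elim: e => [| |b|e [n ap] |e1 [n1 ap1] e2 [n2 ap2] |e1 [n1 ap1] e2 [n2 ap2] |
            e1 [n1 ap1] e2 [n2 ap2]].
- by exists 1; apply: aperiodic_bounded => w /= ->.
- by exists 0.
- by exists 2; apply: aperiodic_bounded => w /= ->.
- by exists n => x z a p q /(ap x z a) /=; tauto.
- exists (n1 + n2) => x z a p q hpq /=.
  have := ap1 x z a p q ltac:(lia); have := ap2 x z a p q ltac:(lia); tauto.
- exists (n1 + n2) => x z a p q hpq /=.
  have := ap1 x z a p q ltac:(lia); have := ap2 x z a p q ltac:(lia); tauto.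
- by exists (n1 + n2); apply: aperiodic_cat.
Qed.

Lemma star_free_aperiodic (L : lang T) : star_free L -> exists n, aperiodic L n.
Proof.
case=> e sem_e; have [n ap] := aperiodic_sf_sem e.
by exists n => x z a p q hpq; rewrite !sem_e; exact: ap.
Qed.

End Aperiodicity.

Section CountInvariance.
Variable T : finType.

(* L is closed under words whose letter counts agree after applying h;
   h = id is commutativity, h = min(_, n) is invariance under capped counts. *)
Definition count_invariant (h : nat -> nat) (L : lang T) : Prop :=
  forall w u : seq T, L w -> (forall a : T, h (count_mem a u) = h (count_mem a w)) -> L u.

Definition word_of_counts (f : T -> nat) : seq T :=
  flatten [seq nseq (f a) a | a <- enum T].

Lemma count_word_of_counts (f : T -> nat) b : count_mem b (word_of_counts f) = f b.
Proof.
rewrite /word_of_counts count_flatten -map_comp sumnE big_map big_enum /=.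
rewrite (bigD1 b) //= big1 => [|c neq_cb]; last by rewrite count_nseq /= (negbTE neq_cb).
by rewrite count_nseq /= eqxx mul1n addn0.
Qed.

Lemma aperiodic_blocks (L : lang T) n : aperiodic L n ->
  forall (s : seq T) (x : seq T) (f g : T -> nat), (forall a, minn (f a) n = minn (g a) n) ->
  L (x ++ flatten [seq nseq (f a) a | a <- s]) <-> L (x ++ flatten [seq nseq (g a) a | a <- s]).
Proof.
move=> ap; elim=> [|a s IH] x f g cap_fg //=.
by rewrite (ap x _ a _ _ (cap_fg a)) !catA; exact: IH.
Qed.

(* Commutativity lets us sort a word; aperiodicity then lets us change each
   letter count freely above the threshold. *)
Lemma commutative_aperiodic_capped (L : lang T) n :
  commutative_lang L -> aperiodic L n -> count_invariant (minn^~ n) L.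
Proof.
move=> comm ap w u Lw cap_uw.
have sorted_w : L (word_of_counts (fun a => count_mem a w)).
  by apply: comm Lw _ => a; rewrite count_word_of_counts.
have sorted_u : L (word_of_counts (fun a => count_mem a u)).
  by have /= -> := aperiodic_blocks ap (enum T) [::] cap_uw.
by apply: comm sorted_u _ => a; rewrite count_word_of_counts.
Qed.

End CountInvariance.

Section Projection.
Variables (T : finType) (G : {set T}).

Lemma count_proj_word (c : subalph G) (w : seq T) :
  count_mem c (proj_word G w) = count_mem (val c) w.
Proof.
have -> : count_mem c (proj_word G w) = count_mem (val c) (map val (proj_word G w)).
  by rewrite count_map; apply: eq_count => y /=; rewrite (inj_eq val_inj).
rewrite (pmap_filter (@insubK _ _ _)) count_filter.
by apply: eq_count => x /=; case: (eqVneq x (val c)) => [->|] //=; rewrite valK.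
Qed.

Definition reinsert (u : seq (subalph G)) (w : seq T) : seq T :=
  map val u ++ [seq x <- w | x \notin G].

Lemma proj_reinsert u w : proj_word G (reinsert u w) = u.
Proof.
rewrite /proj_word pmap_cat (map_pK (@valK _ _ _)).
suff -> : pmap insub [seq x <- w | x \notin G] = [::] :> seq (subalph G) by rewrite cats0.
by elim: w => [|x w IH] //=; case: ifP => //= x_notin_G; rewrite insubN ?x_notin_G.
Qed.

Lemma count_reinsert_in (c : subalph G) u w :
  count_mem (val c) (reinsert u w) = count_mem c u.
Proof.
rewrite count_cat count_filter count_map.
rewrite [count (predI _ _) w](eq_count (a2 := pred0)) ?count_pred0 ?addn0; last first.
  by move=> x /=; case: eqP => // ->; rewrite (valP c).
by apply: eq_count => y /=; rewrite (inj_eq val_inj).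
Qed.

Lemma count_reinsert_out (b : T) u w : b \notin G ->
  count_mem b (reinsert u w) = count_mem b w.
Proof.
move=> b_notin_G; rewrite count_cat count_filter count_map.
rewrite [count (preim _ _) u](eq_count (a2 := pred0)) ?count_pred0 ?add0n; last first.
  by move=> y /=; case: eqP => // eq_yb; move: b_notin_G; rewrite -eq_yb (valP y).
by apply: eq_count => x /=; case: eqP => // ->; rewrite b_notin_G.
Qed.

(* Count invariance is inherited by the projection: the letters of a word u
   over Gamma are put back in place of those of a preimage w. *)
Lemma proj_count_invariant (h : nat -> nat) (L : lang T) :
  count_invariant h L -> count_invariant h (proj_lang G L).
Proof.
move=> invL _ u [w [Lw ->]] counts_u.
exists (reinsert u w); split; last by rewrite proj_reinsert.
apply: invL Lw _ => b; have [b_in_G | b_notin_G] := boolP (b \in G).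
  pose c : subalph G := Sub b b_in_G.
  have -> : b = val c by rewrite SubK.
  by rewrite count_reinsert_in counts_u count_proj_word.
by rewrite count_reinsert_out.
Qed.

End Projection.

Section StarFreeClosure.
Variable T : finType.
Implicit Types A B : lang T.

Lemma star_free_ext A B : star_free A -> (forall w, A w <-> B w) -> star_free B.
Proof. by move=> [e sem_e] eqAB; exists e => w; rewrite -eqAB. Qed.

Lemma star_free_compl A : star_free A -> star_free (fun w => ~ A w).
Proof. by case=> e sem_e; exists (SFCompl e) => w /=; rewrite sem_e. Qed.

Lemma star_free_inter A B : star_free A -> star_free B -> star_free (fun w => A w /\ B w).
Proof. by case=> e sem_e [f sem_f]; exists (SFInter e f) => w /=; rewrite sem_e sem_f. Qed.

Lemma star_free_union A B : star_free A -> star_free B -> star_free (fun w => A w \/ B w).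
Proof. by case=> e sem_e [f sem_f]; exists (SFUnion e f) => w /=; rewrite sem_e sem_f. Qed.

Lemma star_free_const (P : Prop) : star_free (fun _ : seq T => P).
Proof.
have [HP | nHP] := classic P.
  by exists (SFFull T).
by exists (SFCompl (SFFull T)) => w /=; split.
Qed.

Lemma star_free_exists (I : finType) (A : I -> lang T) :
  (forall i, star_free (A i)) -> star_free (fun w => exists i, A i w).
Proof.
move=> sfA.
suff sf_in (s : seq I) : star_free (fun w => exists2 i, i \in s & A i w).
  apply: star_free_ext (sf_in (enum I)) _ => w.
  by split=> [[i _ Aiw] | [i Aiw]]; exists i; rewrite ?mem_enum.
elim: s => [|i s IH].
  by apply: star_free_ext (star_free_const False) _ => w; split=> // -[].
apply: star_free_ext (star_free_union (sfA i) IH) _ => w; split.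
  case=> [Aiw | [j j_in_s Ajw]]; first by exists i; rewrite ?mem_head.
  by exists j; rewrite ?inE ?j_in_s ?orbT.
by case=> j; rewrite inE => /orP [/eqP -> | j_in_s] Ajw; [left | right; exists j].
Qed.

Lemma star_free_forall (I : finType) (A : I -> lang T) :
  (forall i, star_free (A i)) -> star_free (fun w => forall i, A i w).
Proof.
move=> sfA; apply: star_free_ext
  (star_free_compl (star_free_exists (fun i => star_free_compl (sfA i)))) _ => w.
split=> [nex i | all_A [i]]; last exact.
by apply: NNPP => nAiw; apply: nex; exists i.
Qed.

Fixpoint sf_atleast (b : T) (k : nat) : sfexp T :=
  if k is k'.+1 then SFCat (SFFull T) (SFCat (SFSym b) (sf_atleast b k')) else SFFull T.

Lemma sf_atleastP (b : T) k w : sf_sem (sf_atleast b k) w <-> k <= count_mem b w.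
Proof.
elim: k w => [|k IH] w //=; split.
  case=> x [y [-> [_ [p [q [-> [-> /IH q_has_k]]]]]]].
  rewrite !count_cat /= eqxx addn0 add1n addnS ltnS.
  exact: leq_trans q_has_k (leq_addl _ _).
elim: w => [|c w IHw] //=; have [-> | neq_cb] := eqVneq c b.
  rewrite /= add1n ltnS => /IH w_has_k.
  by exists [::], (b :: w); split=> //; split=> //; exists [:: b], w.
rewrite /= add0n => /IHw [x [y [-> [_ sem_y]]]].
by exists (c :: x), y.
Qed.

Lemma star_free_capped_count (b : T) n k :
  star_free (fun w => minn (count_mem b w) n = k).
Proof.
have atleast j : star_free (fun w => j <= count_mem b w).
  by exists (sf_atleast b j) => w; rewrite sf_atleastP.
have [lt_kn | le_nk] := ltnP k n.
  apply: star_free_ext (star_free_inter (atleast k) (star_free_compl (atleast k.+1))) _ => w.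
  by split=> [[ge_k /negP]|]; lia.
apply: star_free_ext (star_free_inter (atleast n) (star_free_const (k <= n))) _ => w.
by split=> [[]|]; lia.
Qed.

(* A language invariant under capped counts is the union, over the finitely
   many capped count profiles f : T -> [0, n] that some word of it realizes,
   of the words with profile f. *)
Lemma capped_invariant_star_free (Q : lang T) n :
  count_invariant (minn^~ n) Q -> star_free Q.
Proof.
move=> invQ.
pose profile (f : {ffun T -> 'I_n.+1}) (w : seq T) := forall b, minn (count_mem b w) n = f b.
have sf_profiles : star_free (fun w => exists f, profile f w /\ exists u, profile f u /\ Q u).
  apply: star_free_exists => f; apply: star_free_inter; last exact: star_free_const.
  by apply: star_free_forall => b; exact: star_free_capped_count.
apply: star_free_ext sf_profiles _ => w; split=> [[f [fw [u [fu Qu]]]] | Qw].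
  by apply: invQ Qu _ => b; rewrite fw fu.
have fw : profile [ffun b => inord (minn (count_mem b w) n)] w.
  by move=> b; rewrite ffunE inordK // ltnS geq_minr.
by exists [ffun b => inord (minn (count_mem b w) n)]; split=> //; exists w.
Qed.

End StarFreeClosure.

Theorem mainTheorem5 (Sigma : finType) (L : lang Sigma) :
  commutative_lang L -> star_free L ->
  forall Gamma : {set Sigma},
    commutative_lang (proj_lang Gamma L) /\ star_free (proj_lang Gamma L).
Proof.
move=> commL sfL Gamma; have [n apL] := star_free_aperiodic sfL.
split.
  exact: (proj_count_invariant (h := id)).
apply: (capped_invariant_star_free (n := n)); apply: proj_count_invariant.
exact: commutative_aperiodic_capped.
Qed.
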